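(* Let $G=(V,E)$ be an undirected, unweighted graph with $|V|=n$ and $|E|=m$. Let $\varepsilon\in(0,\frac1{18}]$ and suppose that $H$ is a $(1\pm\varepsilon)$-spectral sparsifier of $G$. Then $\widehat{H}$, the unweighted version of $H$, is an $\widetilde{O}(\sqrt{m})$-spanner of $G$.
   Context: A $(1\pm\varepsilon)$-spectral sparsifier of $G$ is a weighted graph $H=(V,E_H,w)$ with $E_H\subseteq E$ and positive weights such that $(1-\varepsilon)L_H\preceq L_G\preceq(1+\varepsilon)L_H$, where $L_G=B_G^\top B_G$ ($B_G$ the edge–vertex incidence matrix), $L_H=B_H^\top WB_H$ ($W$ the diagonal matrix of edge weights), and $A\preceq B$ means $x^\top Ax\le x^\top Bx$ for all $x$. $\widehat{H}$ is the graph $(V,E_H)$ with all weights equal to $1$. A subgraph $K$ of $G$ is a $t$-spanner if $d_K(u,v)\le t\cdot d_G(u,v)$ for all $u,v\in V$ ($d$ = shortest-path distance). $\widetilde{O}(f)$ means $f\cdot\mathrm{polylog}(n)$. *)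

From HB Require Import structures.
From mathcomp Require Import all_boot all_order all_algebra.
From mathcomp Require Import all_classical all_reals all_analysis.
Set Implicit Arguments. Unset Strict Implicit. Unset Printing Implicit Defensive.
Import Order.TTheory GRing.Theory Num.Theory.
Local Open Scope ring_scope.

(* Vertex set V = 'I_n.  An undirected simple graph is given by its edge set
   E : {set 'I_n * 'I_n}, each undirected edge {u,v} being stored once as the
   ordered pair (u,v) with u < v. *)
Definition simple_edges (n : nat) (E : {set 'I_n * 'I_n}) : Prop :=
  forall p, p \in E -> (p.1 < p.2)%N.

Definition adj (n : nat) (E : {set 'I_n * 'I_n}) : rel 'I_n :=
  fun u v => ((u, v) \in E) || ((v, u) \in E).

Definition incmx (R : ringType) (n : nat) (E : {set 'I_n * 'I_n})
  : 'M[R]_(#|E|, n) :=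
  \matrix_(i < #|E|, j < n)
     (((j == (enum_val i).1) : nat)%:R - ((j == (enum_val i).2) : nat)%:R).

Definition wmx (R : ringType) (n : nat) (E : {set 'I_n * 'I_n})
  (w : 'I_n * 'I_n -> R) : 'M[R]_#|E| :=
  diag_mx (\row_(i < #|E|) w (enum_val i)).

Definition laplacian (R : ringType) (n : nat) (E : {set 'I_n * 'I_n})
  (w : 'I_n * 'I_n -> R) : 'M[R]_n :=
  (incmx R E)^T *m wmx E w *m incmx R E.

Definition ulaplacian (R : ringType) (n : nat) (E : {set 'I_n * 'I_n})
  : 'M[R]_n := (incmx R E)^T *m incmx R E.

Definition loewner_le (R : numDomainType) (n : nat) (A B : 'M[R]_n) : Prop :=
  forall x : 'cV[R]_n, (x^T *m A *m x) 0 0 <= (x^T *m B *m x) 0 0.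

Definition spectral_sparsifier (R : numDomainType) (n : nat)
  (E F : {set 'I_n * 'I_n}) (w : 'I_n * 'I_n -> R) (eps : R) : Prop :=
  [/\ F \subset E, (forall p, p \in F -> 0 < w p),
      loewner_le ((1 - eps) *: laplacian F w) (ulaplacian R E)
    & loewner_le (ulaplacian R E) ((1 + eps) *: laplacian F w)].

Definition dist_le (n : nat) (E : {set 'I_n * 'I_n}) (u v : 'I_n) (k : nat)
  : Prop :=
  exists p : seq 'I_n, [/\ (size p <= k)%N, path (adj E) u p & last u p = v].

(* the subgraph with edge set F is a t-spanner of the graph with edge set E:
   d_F(u,v) <= t * d_E(u,v) for all u v (with d = +oo when unreachable) *)
Definition spanner (R : numDomainType) (n : nat) (E F : {set 'I_n * 'I_n})
  (t : R) : Prop :=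
  forall (u v : 'I_n) (k : nat), dist_le E u v k ->
    exists k' : nat, k'%:R <= t * k%:R /\ dist_le F u v k'.

From HB Require Import structures.
From mathcomp Require Import all_boot all_order all_algebra.
From mathcomp Require Import all_classical all_reals all_analysis.
From mathcomp Require Import ring lra zify.
Set Implicit Arguments.
Unset Strict Implicit.
Unset Printing Implicit Defensive.

Import Order.TTheory GRing.Theory Num.Theory.
Local Open Scope ring_scope.

(* Fix an edge ab of G and D with D^2 > 2m.  If d_H(a, b) >= D, the potential
   x = min (d_H(a, .), D) changes by at most 1 along every edge of H, so
   x^T L_H x is at most the total weight W of H, while x^T L_G x >= D^2 thanks
   to the edge ab.  Comparing traces in (1 - eps) L_H <= L_G gives
   (1 - eps) W <= m, hence D^2 <= (1 + eps) W <= 2m, a contradiction.  So every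
   edge of G, and therefore every path, is stretched by less than D ~ sqrt(2m). *)

Section LaplacianAlgebra.

Variables (R : comNzRingType) (n : nat) (E : {set 'I_n * 'I_n}).

Lemma sum_indicator_mul (a : 'I_n) (f : 'I_n -> R) :
  \sum_j (((j == a) : nat)%:R * f j) = f a.
Proof.
rewrite (bigD1 a) //= eqxx mul1r big1 ?addr0 // => j /negbTE ->.
by rewrite mul0r.
Qed.

Lemma incmx_mulmx (x : 'cV[R]_n) i :
  (incmx R E *m x) i 0 = x (enum_val i).1 0 - x (enum_val i).2 0.
Proof.
rewrite mxE; under eq_bigr do rewrite mxE mulrBl.
by rewrite sumrB !sum_indicator_mul.
Qed.

Lemma laplacian_qform (w : 'I_n * 'I_n -> R) (x : 'cV[R]_n) :
  (x^T *m laplacian E w *m x) 0 0 = \sum_(e in E) w e * (x e.1 0 - x e.2 0) ^+ 2.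
Proof.
rewrite /laplacian !mulmxA -mulmxA -mulmxA -trmx_mul mulmxA.
rewrite /wmx mul_mx_diag mxE [RHS]big_enum_val /=.
apply: eq_bigr => i _; have := incmx_mulmx x i; rewrite mxE => xi.
by rewrite !mxE xi; ring.
Qed.

Lemma ulaplacian_unit_weights : ulaplacian R E = laplacian E (fun=> 1).
Proof.
rewrite /ulaplacian /laplacian (_ : wmx _ _ = 1%:M) ?mulmx1 //.
by rewrite -diag_const_mx; congr diag_mx; apply/rowP => i; rewrite !mxE.
Qed.

Lemma sum_sqr_indicator_diff (a b : 'I_n) : a != b ->
  \sum_c (((c == a) : nat)%:R - ((c == b) : nat)%:R) ^+ 2 = 2 :> R.
Proof.
move=> ab; rewrite (bigD1 a) //= (bigD1 b) /=; last by rewrite eq_sym.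
rewrite big1 ?addr0; last first.
  by move=> c /andP [/negbTE -> /negbTE ->]; rewrite subrr expr0n.
by rewrite eqxx (negbTE ab) eq_sym (negbTE ab) eqxx subr0 sub0r sqrrN expr1n.
Qed.

Lemma tr_laplacian (w : 'I_n * 'I_n -> R) : simple_edges E ->
  \tr (laplacian E w) = 2 * \sum_(e in E) w e.
Proof.
move=> sE; rewrite /laplacian mxtrace_mulC mulmxA /wmx mulr_sumr big_enum_val /=.
apply: eq_bigr => i _; rewrite mul_mx_diag !mxE; congr (_ * _).
have neq : (enum_val i).1 != (enum_val i).2 by rewrite neq_ltn sE ?enum_valP.
rewrite -(sum_sqr_indicator_diff neq); apply: eq_bigr => j _.
by rewrite !mxE expr2.
Qed.

Lemma tr_ulaplacian : simple_edges E -> \tr (ulaplacian R E) = 2 * #|E|%:R.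
Proof.
by move=> sE; rewrite ulaplacian_unit_weights tr_laplacian // sumr_const.
Qed.

End LaplacianAlgebra.

Lemma qformZ (R : comNzRingType) n (A : 'M[R]_n) c (x : 'cV[R]_n) :
  (x^T *m (c *: A) *m x) 0 0 = c * (x^T *m A *m x) 0 0.
Proof. by rewrite -scalemxAr -scalemxAl mxE. Qed.

Lemma qform_delta (R : nzRingType) n (A : 'M[R]_n) i :
  ((delta_mx i 0 : 'cV[R]_n)^T *m A *m (delta_mx i 0 : 'cV[R]_n)) 0 0 = A i i.
Proof. by rewrite trmx_delta -rowE -colE !mxE. Qed.

Lemma loewner_le_trace (R : numDomainType) n (A B : 'M[R]_n) :
  loewner_le A B -> \tr A <= \tr B.
Proof.
by move=> AB; apply: ler_sum => i _; have := AB (delta_mx i 0); rewrite !qform_delta.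
Qed.

Lemma ulaplacian_qform_ge_edge (R : realDomainType) n (E : {set 'I_n * 'I_n})
    (x : 'cV[R]_n) a b :
  adj E a b -> (x a 0 - x b 0) ^+ 2 <= (x^T *m ulaplacian R E *m x) 0 0.
Proof.
have term_ge0 e : e \in E -> 0 <= 1 * (x e.1 0 - x e.2 0) ^+ 2.
  by rewrite mul1r sqr_ge0.
rewrite ulaplacian_unit_weights laplacian_qform.
case/orP => eE; rewrite (bigD1 _ eE) /= mul1r -?[(x b 0 - x a 0) ^+ 2]sqrrN ?opprB.
all: by rewrite lerDl sumr_ge0 // => e /andP [/term_ge0].
Qed.

Lemma laplacian_qform_le_weight (R : numDomainType) n (F : {set 'I_n * 'I_n})
    (w : 'I_n * 'I_n -> R) (x : 'cV[R]_n) :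
  (forall e, e \in F -> 0 <= w e) ->
  (forall e, e \in F -> (x e.1 0 - x e.2 0) ^+ 2 <= 1) ->
  (x^T *m laplacian F w *m x) 0 0 <= \sum_(e in F) w e.
Proof.
by move=> w_ge0 x_lip; rewrite laplacian_qform; apply: ler_sum => e eF;
  rewrite ler_piMr ?w_ge0 ?x_lip.
Qed.

Lemma sparsifier_weight_le (R : numDomainType) n (E F : {set 'I_n * 'I_n})
    (w : 'I_n * 'I_n -> R) eps :
  simple_edges E -> F \subset E -> eps < 1 ->
  loewner_le ((1 - eps) *: laplacian F w) (ulaplacian R E) ->
  (1 - eps) * \sum_(e in F) w e <= #|E|%:R.
Proof.
move=> sE sFE eps_lt1 /loewner_le_trace.
have sF : simple_edges F by move=> e /(fintype.subsetP sFE) /sE.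
by rewrite mxtraceZ tr_laplacian // tr_ulaplacian // mulrCA ler_pM2l.
Qed.

Section Distances.

Variables (n : nat) (F : {set 'I_n * 'I_n}).

Lemma adjC (a b : 'I_n) : adj F a b = adj F b a.
Proof. by rewrite /adj orbC. Qed.

Lemma dist_le_refl (a : 'I_n) k : dist_le F a a k.
Proof. by exists [::]. Qed.

Lemma dist_le_edge (a b : 'I_n) : adj F a b -> dist_le F a b 1.
Proof. by move=> ab; exists [:: b]; rewrite /= ab. Qed.

Lemma dist_le_trans (a b c : 'I_n) i j :
  dist_le F a b i -> dist_le F b c j -> dist_le F a c (i + j).
Proof.
move=> [p [sp pp lp]] [q [sq pq lq]]; exists (p ++ q); split.
- by rewrite size_cat leq_add.
- by rewrite cat_path pp lp.
- by rewrite last_cat lp.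
Qed.

Lemma dist_le_mono (a b : 'I_n) i j :
  (i <= j)%N -> dist_le F a b i -> dist_le F a b j.
Proof. by move=> ij [p [sp pp lp]]; exists p; split => //; apply: leq_trans ij. Qed.

(* [trunc_dist a D z] is min (d_F(a, z), D): it counts the radii j < D that do
   not yet reach z. *)
Definition trunc_dist (a : 'I_n) (D : nat) (z : 'I_n) : nat :=
  \sum_(j < D) ~~ `[< dist_le F a z j >].

Lemma trunc_dist_self (a : 'I_n) D : trunc_dist a D a = 0%N.
Proof. by apply: big1 => j _; rewrite asboolT //; apply: dist_le_refl. Qed.

Lemma trunc_dist_unreached (a z : 'I_n) D :
  ~ dist_le F a z D.-1 -> trunc_dist a D z = D.
Proof.
move=> far; rewrite -[RHS]card_ord -sum1_card; apply: eq_bigr => j _.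
rewrite asboolF //; apply: contra_not far; apply: dist_le_mono.
by have := ltn_ord j; lia.
Qed.

Lemma sum_negb_shift_le (D : nat) (P Q : nat -> bool) :
  (forall j, Q j -> P j.+1) ->
  (\sum_(j < D) ~~ P j <= (\sum_(j < D) ~~ Q j).+1)%N.
Proof.
case: D => [|D] QP; first by rewrite big_ord0.
rewrite big_ord_recl big_ord_recr /=.
have : (\sum_(i < D) ~~ P (bump 0 i) <= \sum_(i < D) ~~ Q i)%N.
  apply: leq_sum => i _; rewrite /bump /= add1n.
  by move: (QP i); case: (Q i); case: (P i.+1) => // /(_ isT).
case: (P 0%N); case: (Q D) => /=; lia.
Qed.

Lemma trunc_dist_adj (a y z : 'I_n) D :
  adj F y z -> (trunc_dist a D y <= (trunc_dist a D z).+1)%N.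
Proof.
move=> yz; apply: (@sum_negb_shift_le D (fun j => `[< dist_le F a y j >])
  (fun j => `[< dist_le F a z j >])) => j /asboolP az; apply/asboolP.
by rewrite -addn1; apply: (dist_le_trans az); apply: dist_le_edge; rewrite adjC.
Qed.

End Distances.

Lemma dist_le_lift n (E F : {set 'I_n * 'I_n}) K :
  (forall a b, adj E a b -> dist_le F a b K) ->
  forall u v k, dist_le E u v k -> dist_le F u v (k * K).
Proof.
move=> edgeK u v k [p [sp pp <-]]; apply: (dist_le_mono (leq_mul sp (leqnn K))).
elim: p u pp {sp} => [|b p IH] u /=; first by move=> _; apply: dist_le_refl.
by case/andP => ub bp; rewrite mulSn; apply: dist_le_trans (edgeK _ _ ub) (IH _ bp).
Qed.

Lemma sparsifier_edge_stretch (R : realFieldType) n (E F : {set 'I_n * 'I_n})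
    (w : 'I_n * 'I_n -> R) eps D :
  simple_edges E -> 0 <= eps -> eps <= 3^-1 -> spectral_sparsifier E F w eps ->
  (2 * #|E| < D ^ 2)%N -> forall a b, adj E a b -> dist_le F a b D.-1.
Proof.
move=> sE eps_ge0 eps_le [sFE w_gt0 lowerL upperL] ltD a b ab.
apply: contrapT => far.
pose x : 'cV[R]_n := \col_z (trunc_dist F a D z)%:R.
have x_lip e : e \in F -> (x e.1 0 - x e.2 0) ^+ 2 <= 1.
  move=> eF; have e12 : adj F e.1 e.2 by rewrite /adj -surjective_pairing eF.
  rewrite !mxE; set p := trunc_dist F a D e.1; set q := trunc_dist F a D e.2.
  have pq : p%:R <= q%:R + 1 :> R by rewrite natr1 ler_nat trunc_dist_adj.
  have qp : q%:R <= p%:R + 1 :> R by rewrite natr1 ler_nat trunc_dist_adj // adjC.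
  by nra.
have xa : x a 0 = 0 by rewrite mxE trunc_dist_self.
have xb : x b 0 = D%:R by rewrite mxE trunc_dist_unreached.
have gap : (D%:R) ^+ 2 <= (x^T *m ulaplacian R E *m x) 0 0.
  by have := ulaplacian_qform_ge_edge x ab; rewrite xa xb sub0r sqrrN.
have cut := laplacian_qform_le_weight (fun e eF => ltW (w_gt0 e eF)) x_lip.
have weight : (1 - eps) * \sum_(e in F) w e <= #|E|%:R.
  by apply: sparsifier_weight_le => //; apply: (le_lt_trans eps_le); lra.
have upper := upperL x; rewrite qformZ in upper.
have W_ge0 : 0 <= \sum_(e in F) w e by apply: sumr_ge0 => e /w_gt0 /ltW.
move: ltD; rewrite ltnNge => /negP; apply.
rewrite -(ler_nat R) natrM natrX.
move: gap upper cut weight W_ge0; set W := \sum_(e in F) w e.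
set P := (x^T *m laplacian F w *m x) 0 0.
set Q := (x^T *m ulaplacian R E *m x) 0 0 => gap upper cut weight W_ge0.
have : (1 + eps) * P <= (1 + eps) * W by rewrite ler_wpM2l //; lra.
have : 0 <= (1 - 3 * eps) * W by apply: mulr_ge0 => //; lra.
lra.
Qed.

Lemma nat_sqrt_bracket N : exists D, (N < D ^ 2)%N /\ (D.-1 ^ 2 <= N)%N.
Proof.
have exD : exists D, (N < D ^ 2)%N by exists N.+1; nia.
case: (ex_minnP exD) => D ltD minD; exists D; split => //.
by case: D ltD minD => [|D] //= _ minD; rewrite leqNgt; apply/negP => /minD; lia.
Qed.

Lemma le_two_sqrt (R : rcfType) (d m : R) :
  0 <= d -> 0 <= m -> d ^+ 2 <= 2 * m -> d <= 2 * Num.sqrt m.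
Proof.
move=> d_ge0 m_ge0 le_dm; have := sqr_sqrtr m_ge0; have := sqrtr_ge0 m.
by set s := Num.sqrt m => s_ge0 s_sqr; nra.
Qed.

Theorem theorem4p2 :
  exists (C k : nat), forall (R : realType) (n : nat)
    (E F : {set 'I_n * 'I_n}) (w : 'I_n * 'I_n -> R) (eps : R),
    simple_edges E ->
    0 < eps -> eps <= 18^-1 ->
    spectral_sparsifier E F w eps ->
    spanner E F (C%:R * Num.sqrt (#|E|%:R) * (ln (n%:R : R)) ^+ k).
Proof.
exists 2%N, 0%N => R n E F w eps sE eps_gt0 eps_le hsp.
have [D [ltD leD]] := nat_sqrt_bracket (2 * #|E|).
have eps_le3 : eps <= 3^-1 by apply: (le_trans eps_le); lra.
have stretch := sparsifier_edge_stretch sE (ltW eps_gt0) eps_le3 hsp ltD.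
have leDm : (D.-1)%:R <= 2 * Num.sqrt #|E|%:R :> R.
  by apply: le_two_sqrt; rewrite ?ler0n // -natrX -natrM ler_nat.
move=> u v k /(dist_le_lift stretch) uv; exists (k * D.-1)%N; split => //.
by rewrite expr0 mulr1 natrM mulrC ler_wpM2r.
Qed.
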